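(* Let $\mu$ be a Borel probability measure on a finite-dimensional real Hilbert space $V$ with compact support $\Omega$, let $A\in\mathrm{hull}(\Omega)$, and let $\eta>0$, $\delta\in(0,1)$. Suppose $A$ is in the $(\eta,\delta)$-interior of $\mu$ and $Y^\star\in V_{\mathcal L}$ minimizes $F_A$ over $V_{\mathcal L}$. Then $\|Y^\star\|\le \frac{1}{\eta}\log\frac{1}{\delta}$.
   Context: $F_A(Y)=\langle Y,A\rangle+\log\int_\Omega e^{-\langle Y,X\rangle}d\mu(X)=\log\int_\Omega e^{-\langle Y,X-A\rangle}d\mu(X)$. $V_{\mathcal L}$ is the linear subspace parallel to the affine hull $\mathrm{aff}(\Omega)$. The $(0,\delta)$-interior of $\mu$ is the set of $A'\in\mathrm{hull}(\Omega)$ such that for every $Y\in V_{\mathcal L}$, $\mu(\{X\in\Omega:\langle X-A',Y\rangle\ge 0\})>\delta$. The $(\eta,\delta)$-interior of $\mu$ is the set of $A\in\mathrm{hull}(\Omega)$ such that every $A'\in\mathrm{aff}(\Omega)$ with $\|A'-A\|<\eta$ lies in the $(0,\delta)$-interior of $\mu$. *)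

From HB Require Import structures.
From mathcomp Require Import all_boot all_order all_algebra.
From mathcomp Require Import all_classical all_reals all_analysis.
Set Implicit Arguments. Unset Strict Implicit. Unset Printing Implicit Defensive.
Import Order.TTheory GRing.Theory Num.Theory.
Import numFieldNormedType.Exports.
Local Open Scope classical_set_scope.
Local Open Scope ring_scope.

(* The finite-dimensional real Hilbert space V is modelled as R^n = 'rV[R]_n
   with the standard inner product. *)
Definition inner (R : realType) (n : nat) (u v : 'rV[R]_n) : R :=
  \sum_(i < n) u ord0 i * v ord0 i.

Definition hnorm (R : realType) (n : nat) (u : 'rV[R]_n) : R :=
  Num.sqrt (inner u u).

Definition Vmeas (R : realType) (n : nat) : measurableType _ :=
  g_sigma_algebraType (@open 'rV[R]_n).

(* Support of a measure: points all of whose open neighbourhoods have positive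
   measure (the smallest closed set of full measure). *)
Definition msupport (R : realType) (n : nat)
  (mu : {measure set (Vmeas R n) -> \bar R}) : set 'rV[R]_n :=
  [set x | forall U : set 'rV[R]_n, open U -> U x -> (0 < mu U)%E].

Definition hull (R : realType) (n : nat) (S : set 'rV[R]_n) : set 'rV[R]_n :=
  [set x | exists (k : nat) (w : 'I_k -> R) (p : 'I_k -> 'rV[R]_n),
     (forall i, 0 <= w i) /\ \sum_(i < k) w i = 1 /\ (forall i, S (p i)) /\
     x = \sum_(i < k) w i *: p i].

Definition aff (R : realType) (n : nat) (S : set 'rV[R]_n) : set 'rV[R]_n :=
  [set x | exists (k : nat) (w : 'I_k -> R) (p : 'I_k -> 'rV[R]_n),
     \sum_(i < k) w i = 1 /\ (forall i, S (p i)) /\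
     x = \sum_(i < k) w i *: p i].

(* The linear subspace parallel to aff S. *)
Definition VL (R : realType) (n : nat) (S : set 'rV[R]_n) : set 'rV[R]_n :=
  [set y | exists a b, aff S a /\ aff S b /\ y = a - b].

Definition FA (R : realType) (n : nat)
  (mu : {measure set (Vmeas R n) -> \bar R}) (A Y : 'rV[R]_n) : R :=
  ln (fine (\int[mu]_(x in [set: Vmeas R n])
              (expR (- inner Y ((x : 'rV[R]_n) - A)))%:E)).

Definition interior0 (R : realType) (n : nat)
  (mu : {measure set (Vmeas R n) -> \bar R}) (delta : R) : set 'rV[R]_n :=
  [set A' | hull (msupport mu) A' /\
     forall Y, VL (msupport mu) Y ->
       (delta%:E < mu [set X : Vmeas R n | (0 <= inner ((X : 'rV[R]_n) - A') Y)%R])%E].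

Definition interior_eta (R : realType) (n : nat)
  (mu : {measure set (Vmeas R n) -> \bar R}) (eta delta : R) : set 'rV[R]_n :=
  [set A | hull (msupport mu) A /\
     forall A', aff (msupport mu) A' -> hnorm (A' - A) < eta ->
       interior0 mu delta A'].

(* Let r = ||Ystar|| and 0 <= z < eta r.  The point A' = A - (z/r^2) Ystar
   lies in aff(Omega) at distance z/r < eta from A, so it belongs to the
   (0,delta)-interior of mu; testing the direction -Ystar at A' shows that the
   set {X : -<Ystar, X - A> >= z} has mu-mass > delta.  Bounding the integrand
   from below by e^z on that set gives F_A(Ystar) >= z + ln delta.  Since
   Ystar minimizes F_A over V_L, which contains 0, and F_A(0) = 0, we get
   z <= ln(1/delta) for all such z, hence eta r <= ln(1/delta).  Compactness
   of the support is needed only to know that the integral defining F_A is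
   finite (F_A takes the logarithm of its finite part). *)
From HB Require Import structures.
From mathcomp Require Import all_boot all_order all_algebra.
From mathcomp Require Import all_classical all_reals all_analysis.
From mathcomp Require Import measurable_realfun.
From mathcomp Require Import ring lra.
Import Order.TTheory GRing.Theory Num.Theory.
Import numFieldNormedType.Exports.
Local Open Scope classical_set_scope.
Local Open Scope ring_scope.

Section InnerProduct.
Context {R : realType} {n : nat}.
Implicit Types (v X A Y : 'rV[R]_n) (c t : R).

Lemma inner_ge0 v : 0 <= inner v v.
Proof. by apply: sumr_ge0 => i _; rewrite -expr2 sqr_ge0. Qed.

Lemma inner0l v : inner 0 v = 0.
Proof. by rewrite /inner big1 // => i _; rewrite mxE mul0r. Qed.

Lemma hnorm_sqr v : inner v v = hnorm v ^+ 2.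
Proof. by rewrite /hnorm sqr_sqrtr // inner_ge0. Qed.

Lemma hnormZ c v : hnorm (c *: v) = `|c| * hnorm v.
Proof.
rewrite /hnorm (_ : inner (c *: v) (c *: v) = c ^+ 2 * inner v v).
  by rewrite sqrtrM ?sqr_ge0 // sqrtr_sqr.
rewrite /inner mulr_sumr; apply: eq_bigr => i _; rewrite !mxE; ring.
Qed.

(* Moving the base point from A to A - t Y changes the pairing with -Y by
   t <Y, Y>; this turns the half-spaces of the interior condition at A - t Y
   into superlevel sets of X |-> -<Y, X - A>. *)
Lemma inner_shift X A Y t :
  inner (X - (A - t *: Y)) (- Y) = - inner Y (X - A) - t * inner Y Y.
Proof.
rewrite /inner mulr_sumr -sumrN -sumrB.
by apply: eq_bigr => i _; rewrite !mxE; ring.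
Qed.

End InnerProduct.

Section AffineHull.
Context {R : realType} {n : nat}.
Implicit Types (S : set 'rV[R]_n) (x y a b : 'rV[R]_n) (u t : R).

Lemma aff_comb S x y u : aff S x -> aff S y -> aff S (u *: x + (1 - u) *: y).
Proof.
move=> [k1 [w1 [p1 [s1 [P1 ->]]]]] [k2 [w2 [p2 [s2 [P2 ->]]]]].
pose w i := match fintype.split i with
            | inl a => u * w1 a | inr b => (1 - u) * w2 b end.
pose p i := match fintype.split i with inl a => p1 a | inr b => p2 b end.
exists (k1 + k2)%N, w, p.
have wl (i : 'I_k1) : w (lshift k2 i) = u * w1 i by rewrite /w (unsplitK (inl i)).
have wr (j : 'I_k2) : w (rshift k1 j) = (1 - u) * w2 j.
  by rewrite /w (unsplitK (inr j)).
have pl (i : 'I_k1) : p (lshift k2 i) = p1 i by rewrite /p (unsplitK (inl i)).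
have pr (j : 'I_k2) : p (rshift k1 j) = p2 j by rewrite /p (unsplitK (inr j)).
split; [|split].
- rewrite big_split_ord /= (eq_bigr _ (fun i _ => wl i)) (eq_bigr _ (fun j _ => wr j)).
  by rewrite -!mulr_sumr s1 s2 !mulr1 addrC subrK.
- by move=> i; rewrite /p; case: (fintype.split i).
- rewrite [RHS]big_split_ord /= !scaler_sumr; congr (_ + _); apply: eq_bigr.
    by move=> i _; rewrite wl pl scalerA.
  by move=> j _; rewrite wr pr scalerA.
Qed.

Arguments aff_comb {S x y} u.

Lemma aff_shift S x a b t : aff S x -> aff S a -> aff S b ->
  aff S (x + t *: (a - b)).
Proof.
move=> hx ha hb.
have h := aff_comb 2 (aff_comb 2^-1 hx (aff_comb t ha hb)) hb.
suff -> : x + t *: (a - b) =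
  2 *: (2^-1 *: x + (1 - 2^-1) *: (t *: a + (1 - t) *: b)) + (1 - 2) *: b by [].
have two0 : (2 : R) != 0 by rewrite pnatr_eq0.
by apply/rowP => i; rewrite !mxE; field.
Qed.

Lemma hull_aff {S x} : hull S x -> aff S x.
Proof. by move=> [k [w [p [_ [s [P ->]]]]]]; exists k, w, p. Qed.

Lemma VL0 {S x} : aff S x -> VL S 0.
Proof. by move=> hx; exists x, x; rewrite subrr. Qed.

Lemma VLN {S y} : VL S y -> VL S (- y).
Proof. by move=> [a [b [ha [hb ->]]]]; exists b, a; rewrite opprB. Qed.

End AffineHull.

Section Measurability.
Context {R : realType} {n : nat}.

(* Coordinates are bounded by the (sup) norm of 'rV[R]_n. *)
Lemma entry_le_norm (x : 'rV[R]_n) i : `|x ord0 i| <= `|x|.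
Proof.
rewrite [leRHS]/Num.Def.normr /= mx_normrE; apply/bigmax_geP; right => /=.
by exists (ord0, i).
Qed.

Lemma open_slab (i : 'I_n) (a b : R) :
  open [set x : 'rV[R]_n | a < x ord0 i < b].
Proof.
rewrite openE => x /andP[ax xb].
apply/nbhs_ballP; exists (Num.min (x ord0 i - a) (b - x ord0 i)) => /=.
  by rewrite lt_min !subr_gt0 ax xb.
move=> y; rewrite -ball_normE /= lt_min => /andP[h1 h2].
have := le_lt_trans (entry_le_norm (x - y) i) h1.
have := le_lt_trans (entry_le_norm (x - y) i) h2.
rewrite !mxE => /ltr_normlP[p1 _] /ltr_normlP[_ p2].
by apply/andP; split; lra.
Qed.

Lemma measurable_coord (i : 'I_n) :
  measurable_fun setT (fun x : Vmeas R n => (x : 'rV[R]_n) ord0 i).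
Proof.
apply: (measurability _ (RGenOpens.measurableE R)).
move=> _ [_ [a [b ->]] <-]; apply: sub_sigma_algebra; rewrite setTI.
suff -> : (fun x : Vmeas R n => (x : 'rV[R]_n) ord0 i) @^-1` `]a, b[%classic =
   [set x : 'rV[R]_n | a < x ord0 i < b] by exact: open_slab.
by apply/seteqP; split => x /=; rewrite in_itv.
Qed.

Lemma measurable_inner (Y A : 'rV[R]_n) :
  measurable_fun setT (fun x : Vmeas R n => inner Y ((x : 'rV[R]_n) - A)).
Proof.
rewrite (_ : (fun x : Vmeas R n => _) = (fun x : Vmeas R n =>
    \sum_(i < n) Y ord0 i * ((x : 'rV[R]_n) ord0 i - A ord0 i))); last first.
  by apply/funext => x; apply: eq_bigr => i _; rewrite !mxE.
apply: measurable_sum => i; apply: measurable_funM; first exact: measurable_cst.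
by apply: measurable_funB; [exact: measurable_coord | exact: measurable_cst].
Qed.

Lemma measurable_integrand (Y A : 'rV[R]_n) :
  measurable_fun [set: Vmeas R n]
    (fun x : Vmeas R n => (expR (- inner Y ((x : 'rV[R]_n) - A)))%:E).
Proof.
apply/measurable_EFinP; apply: measurableT_comp; first exact: measurable_expR.
exact: measurable_funN (measurable_inner Y A).
Qed.

Lemma measurable_superlevel (Y A : 'rV[R]_n) (c : R) :
  measurable [set x : Vmeas R n | c <= - inner Y ((x : 'rV[R]_n) - A)].
Proof.
have := measurable_funN (measurable_inner Y A) measurableT (measurable_itv `[c, +oo[).
rewrite setTI; congr measurable; apply/seteqP.
by split => x /=; rewrite in_itv andbT.
Qed.

End Measurability.

Section CompactSupport.
Context {R : realType} {n : nat}.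
Variable mu : {measure set (Vmeas R n) -> \bar R}.

(* Every point off the support has an open mu-null neighbourhood; hence a
   compact set avoiding the support is covered by finitely many null open
   sets and is mu-negligible. *)
Lemma compact_off_support_negligible (K : set 'rV[R]_n) :
  compact K -> (forall x, K x -> ~ msupport mu x) ->
  mu.-negligible (K : set (Vmeas R n)).
Proof.
rewrite compact_cover => cK Koff.
pose N := [set V : set 'rV[R]_n | open V /\ mu V = 0%E].
have cov : K `<=` cover N id.
  move=> x /Koff /existsNP[V /not_implyP[oV /not_implyP[Vx /negP]]].
  rewrite -leNgt => mV; exists V => //; split => //.
  by apply/eqP; rewrite eq_le mV measure_ge0.
have [D sD KD] := cK _ N id (fun V NV => NV.1) cov.
apply: (negligibleS (mu := mu) KD); rewrite /cover bigcup_fset big_seq.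
apply: (big_ind (fun B : set (Vmeas R n) => mu.-negligible B)).
- exact: negligible_set0.
- exact: negligibleU.
- move=> V /sD; rewrite inE => -[oV mV]; exists V; split => //.
  by apply: sub_sigma_algebra; exact: oV.
Qed.

(* A measure with compact support is concentrated on a ball: outside the
   1-neighbourhood U of the support everything is negligible, since the
   complement of U is a countable union of compact sets avoiding the support. *)
Lemma compact_support_concentrated :
  compact (msupport mu) ->
  exists B : R, mu.-negligible ([set x : 'rV[R]_n | B < `|x|] : set (Vmeas R n)).
Proof.
move=> cpt; have [M [_ HM]] := compact_bounded cpt.
have supp_le w : msupport mu w -> `|w| <= M + 1.
  by move=> sw; apply: HM => //; rewrite ltrDl.
pose U := \bigcup_(w in msupport mu) ball w (1 : R).
pose K (k : nat) := ~` U `&` closed_ball (0 : 'rV[R]_n) k.+1%:R.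
have ballK k x : closed_ball (0 : 'rV[R]_n) k.+1%:R x = (`|x| <= k.+1%:R).
  by rewrite closed_ballE // /closed_ball_ /= sub0r normrN.
have negK k : mu.-negligible (K k : set (Vmeas R n)).
  apply: compact_off_support_negligible => [|x [Ux _] sx]; last first.
    by apply: Ux; exists x => //; exact: ballxx.
  apply: bounded_closed_compact.
    exists k.+1%:R; split; first by rewrite realn.
    by move=> r kr x [_]; rewrite ballK => /le_trans; apply; exact: ltW.
  apply: closedI; last exact: closed_ball_closed.
  by apply/open_closedC/bigcup_open => w _; exact: ball_open.
exists (M + 2); apply: (negligibleS _ (negligible_bigcup negK)).
move=> x /= Mx; exists (Num.truncn `|x|) => //; split; last first.
  by rewrite ballK; exact/ltW/truncnS_gt.
move=> [w sw]; rewrite -ball_normE /= => wx.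
have := ler_normB w (w - x); rewrite opprB addrC subrK => hx.
have := supp_le w sw; lra.
Qed.

End CompactSupport.

Section PartitionIntegral.
Context {R : realType} {n : nat}.
Variable mu : probability (Vmeas R n) R.

Local Notation Z A Y :=
  (\int[mu]_(x in [set: Vmeas R n]) (expR (- inner Y ((x : 'rV[R]_n) - A)))%:E)%E.

Lemma integral_cst_prob (k : \bar R) :
  (\int[mu]_(x in [set: Vmeas R n]) cst k x = k)%E.
Proof.
rewrite integral_cst // [X in (_ * X)%E](_ : _ = 1%E) ?mule1 //.
exact: probability_setT.
Qed.

Lemma Z_ge0 (A Y : 'rV[R]_n) : (0 <= Z A Y)%E.
Proof. by apply: integral_ge0 => x _; rewrite lee_fin expR_ge0. Qed.

(* With compact support the integrand is essentially bounded, so Z_A(Y) is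
   finite. *)
Lemma Z_fin_num (A Y : 'rV[R]_n) : compact (msupport mu) -> Z A Y \is a fin_num.
Proof.
move=> /compact_support_concentrated[B negB].
pose C := expR (\sum_(i < n) `|Y ord0 i| * (B + `|A ord0 i|)).
rewrite ge0_fin_numE ?Z_ge0 //; apply: (@le_lt_trans _ _ C%:E); last exact: ltry.
apply: le_trans (_ : (\int[mu]_(x in [set: Vmeas R n]) (cst C%:E x) <= _)%E).
  apply: ae_ge0_le_integral => //.
  - exact: measurable_integrand.
  - by move=> x _; rewrite lee_fin expR_ge0.
  apply: (negligibleS _ negB) => x /= hx; apply: contrapT => hxB; apply: hx => _.
  rewrite lee_fin ler_expR /inner -sumrN; apply: ler_sum => i _; rewrite !mxE.
  apply: le_trans (ler_norm _) _; rewrite normrN normrM ler_wpM2l //.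
  apply: le_trans (ler_normB _ _) _; rewrite lerD2r.
  by rewrite (le_trans (entry_le_norm x i)) // leNgt; apply/negP.
by rewrite integral_cst_prob.
Qed.

Lemma Z_ge_mass {A Y : 'rV[R]_n} {S : set (Vmeas R n)} {c : R} :
  measurable S -> (forall x, S x -> c <= - inner Y ((x : 'rV[R]_n) - A)) ->
  ((expR c)%:E * mu S <= Z A Y)%E.
Proof.
move=> mS hS; rewrite -integral_cst //.
apply: (@le_trans _ _
  (\int[mu]_(x in S) (expR (- inner Y ((x : 'rV[R]_n) - A)))%:E)%E).
  apply: ge0_le_integral => //.
  - by move=> x _; rewrite lee_fin expR_ge0.
  - exact: measurable_funS (measurable_integrand Y A).
  - by move=> x Sx; rewrite lee_fin ler_expR; exact: hS.
by apply: ge0_subset_integral => //; exact: measurable_integrand.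
Qed.

Lemma FA_ge_mass {A Y : 'rV[R]_n} {S : set (Vmeas R n)} {c delta : R} :
  compact (msupport mu) -> measurable S ->
  (forall x, S x -> c <= - inner Y ((x : 'rV[R]_n) - A)) ->
  0 < delta -> (delta%:E <= mu S)%E ->
  c + ln delta <= FA mu A Y.
Proof.
move=> cpt mS hS d0 dS.
have ZE : Z A Y = (fine (Z A Y))%:E by rewrite fineK // Z_fin_num.
have lowZ : expR c * delta <= fine (Z A Y).
  rewrite -lee_fin -ZE EFinM; apply: le_trans _ (Z_ge_mass mS hS).
  by rewrite lee_wpmul2l // lee_fin expR_ge0.
have pos : 0 < expR c * delta by rewrite mulr_gt0 ?expR_gt0.
rewrite /FA -[c]expRK -lnM ?posrE ?expR_gt0 //.
by rewrite ler_ln ?posrE // (lt_le_trans pos lowZ).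
Qed.

Lemma FA0 (A : 'rV[R]_n) : FA mu A 0 = 0.
Proof.
rewrite /FA; under eq_integral => x _ do rewrite inner0l oppr0 expR0.
by rewrite integral_cst_prob ln1.
Qed.

End PartitionIntegral.

Section Interior.
Context {R : realType} {n : nat}.
Variable mu : {measure set (Vmeas R n) -> \bar R}.

(* A point A of the (eta,delta)-interior puts mass > delta on every set
   {X : -<Y, X - A> >= z} with Y in V_L and 0 <= z < eta ||Y||: this set is
   the half-space {<X - A', -Y> >= 0} based at A' = A - (z/||Y||^2) Y, a point
   of aff(Omega) at distance z/||Y|| < eta from A. *)
Lemma interior_eta_mass {eta delta z : R} {A Y : 'rV[R]_n} :
  interior_eta mu eta delta A -> VL (msupport mu) Y -> 0 <= z < eta * hnorm Y ->
  (delta%:E < mu [set x : Vmeas R n | (z <= - inner Y ((x : 'rV[R]_n) - A))%R])%E.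
Proof.
move=> [hA hint] hY /andP[z0 zlt].
set r := hnorm Y in zlt; set t := z / inner Y Y.
have r0 : 0 < r.
  by rewrite lt_def sqrtr_ge0 andbT; apply: contraTneq zlt => ->; rewrite mulr0 -leNgt.
have YY0 : inner Y Y != 0 by rewrite hnorm_sqr -/r sqrf_eq0 gt_eqF.
have tYY : t * inner Y Y = z by rewrite divfK.
have [a [b [ha [hb Yab]]]] := hY.
have affA' : aff (msupport mu) (A - t *: Y).
  by rewrite Yab -scaleNr; apply: aff_shift => //; exact: hull_aff.
have dist : hnorm (A - t *: Y - A) < eta.
  rewrite addrAC subrr add0r -scaleNr hnormZ normrN ger0_norm; last first.
    by rewrite divr_ge0 ?inner_ge0.
  by rewrite /t hnorm_sqr -/r expr2 invfM !mulrA divfK ?gt_eqF // ltr_pdivrMr.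
have := (hint _ affA' dist).2 _ (VLN hY).
congr (_ < mu _)%E; apply/seteqP; split => x /=; rewrite inner_shift tYY; lra.
Qed.

End Interior.

Lemma FA_interior_lower {R : realType} {n : nat} (mu : probability (Vmeas R n) R)
    {eta delta z : R} {A Y : 'rV[R]_n} :
  compact (msupport mu) -> interior_eta mu eta delta A -> 0 < delta ->
  VL (msupport mu) Y -> 0 <= z < eta * hnorm Y ->
  z + ln delta <= FA mu A Y.
Proof.
move=> cpt hint d0 hY hz.
apply: (FA_ge_mass mu cpt (measurable_superlevel Y A z)) => //.
exact/ltW/(interior_eta_mass mu hint hY hz).
Qed.

Theorem mainTheorem3 (R : realType) (n : nat)
  (mu : probability (Vmeas R n) R) (A Ystar : 'rV[R]_n) (eta delta : R) :
  @compact 'rV[R]_n (msupport mu) ->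
  hull (msupport mu) A ->
  0 < eta -> 0 < delta < 1 ->
  interior_eta mu eta delta A ->
  VL (msupport mu) Ystar ->
  (forall Y, VL (msupport mu) Y -> FA mu A Ystar <= FA mu A Y) ->
  hnorm Ystar <= eta^-1 * ln (delta^-1).
Proof.
move=> cpt hA eta0 /andP[d0 d1] hint hY hmin.
have L_ge0 : 0 <= ln delta^-1 by rewrite ln_ge0 // invf_ge1 // ltW.
have lnV_delta : ln delta^-1 = - ln delta by rewrite lnV ?posrE.
have F_le0 : FA mu A Ystar <= 0.
  by rewrite -(FA0 mu A); apply: hmin; exact: VL0 (hull_aff hA).
rewrite -(ler_pM2l eta0) mulrA mulfV ?gt_eqF // mul1r leNgt; apply/negP => hlt.
(* A level strictly between ln(1/delta) and eta ||Ystar|| gives a contradiction. *)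
have hz : 0 <= (ln delta^-1 + eta * hnorm Ystar) / 2 < eta * hnorm Ystar.
  by apply/andP; split; lra.
have := FA_interior_lower mu cpt hint d0 hY hz.
rewrite lnV_delta; lra.
Qed.
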